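(* Let $a,b\in\mathbb{N}$ with $a\equiv b\equiv 1\pmod 2$ (no coprimality assumed). Then $$s_{5}(a,b)+s_{5}(b,a)=\frac{1}{2}-\frac{(a,b)^{2}}{2ab}.$$
   Context: For $a,b\in\mathbb{Z}$ with $b\neq0$, the Hardy–Berndt sum is $s_{5}(a,b)=\sum_{r=0}^{|b|-1}(-1)^{r+[\frac{ar}{b}]}\left(\left(\frac{r}{b}\right)\right)$, where $[x]$ is the floor of $x$, $\{x\}=x-[x]$, and $((x))=\{x\}-\tfrac12$ for $x\notin\mathbb{Z}$, $((x))=0$ for $x\in\mathbb{Z}$. $(a,b)$ is the greatest common divisor. *)

From mathcomp Require Import all_boot all_order all_algebra.
Set Implicit Arguments. Unset Strict Implicit. Unset Printing Implicit Defensive.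
Import Order.TTheory GRing.Theory Num.Theory.
Local Open Scope ring_scope.

Definition sawtooth (x : rat) : rat :=
  if x \is a Num.int then 0 else x - (Num.floor x)%:~R - 1 / 2.

Definition s5 (a b : int) : rat :=
  \sum_(r < `|b|%N)
     ((-1 : rat) ^ (r%:Z + Num.floor ((a%:~R * r%:R) / b%:~R : rat))) *
     sawtooth (r%:R / b%:~R).

From mathcomp Require Import all_boot all_order all_algebra.
From mathcomp Require Import zify ring.
Import Order.TTheory GRing.Theory Num.Theory.
Local Open Scope ring_scope.

(* Put N = ab and h(n) = (-1)^([n/a] + [n/b]).  As a and b are odd, h changes
   sign at n exactly when n is a multiple of one of a, b but not of both:
   h(n) - h(n-1) = 2 h(n) D(n) with D(n) = [a|n] + [b|n] - 2[a|n][b|n].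
   Abel summation of (n - N/2)(h(n) - h(n-1)) over 0 < n <= N gives
   N - sum_{n<N} h(n) = N - (a,b)^2 on one side; the sum of h reduces, by
   parity, to a sum over residues mod a and mod b, which the Chinese remainder
   theorem evaluates.  On the other side it gives 2 sum_{n<N} (n - N/2) h(n) D(n),
   where the multiples of a contribute N s5(a,b) - N/2, those of b contribute
   N s5(b,a) - N/2, and the common multiples contribute -N/2 by the symmetry
   n -> N - n. *)

Lemma big_nat_mul_shift (R : nmodType) m n (F : nat -> R) :
  \sum_(0 <= i < m * n) F i = \sum_(0 <= k < m) \sum_(0 <= t < n) F (k * n + t)%N.
Proof.
rewrite big_nat_mul; apply: eq_bigr => k _.
rewrite mulSn addnC -{1}(add0n (k * n)%N) big_addn addKn.
by apply: eq_bigr => t _; rewrite addnC.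
Qed.

Lemma sum_sign_odd (R : nzRingType) p : odd p -> \sum_(i < p) (-1 : R) ^+ i = 1.
Proof.
move=> p_odd; rewrite -(odd_double_half p) p_odd add1n.
elim: p./2 => [|k IH]; first by rewrite big_ord1.
rewrite doubleS 2!big_ord_recr /= IH !exprS -signr_odd odd_double.
by rewrite expr0 mulr1 mulN1r opprK addrNK.
Qed.

Lemma odd_divn n a : odd a -> odd (n %/ a) = odd n (+) odd (n %% a).
Proof. by move=> a_odd; rewrite {2}(divn_eq n a) oddD oddM a_odd andbT addbK. Qed.

Lemma modn_mulD_mul m k g t : (t < g)%N -> (0 < k)%N ->
  ((m * g + t) %% (k * g) = (m %% k) * g + t)%N.
Proof.
move=> t_lt_g k_gt0.
rewrite {1}(divn_eq m k) mulnDl -mulnA -addnA modnMDl modn_small //.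
apply: (@leq_trans ((m %% k).+1 * g)); first by rewrite mulSn; lia.
by rewrite leq_mul2r ltn_pmod // orbT.
Qed.

Lemma floor_natr_div (R : archiRealFieldType) (n b : nat) : (0 < b)%N ->
  Num.floor (n%:R / b%:R : R) = (n %/ b)%N%:Z.
Proof.
move=> b_gt0; have b_gt0' : (0 : R) < b%:R by rewrite ltr0n.
apply: floor_def; rewrite ler_pdivlMr // ltr_pdivrMr // -PoszD addn1.
by rewrite !pmulrn -!natrM ler_nat ltr_nat leq_divM ltn_ceil.
Qed.

Lemma abel_summation (R : comNzRingType) (h : nat -> R) N c :
  \sum_(0 <= m < N) ((m.+1)%:R - c) * (h m.+1 - h m)
  = N%:R * h N - \sum_(0 <= m < N) h m - c * (h N - h 0%N).
Proof.
elim: N => [|N IH]; first by rewrite !big_geq // mul0r; ring.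
by rewrite !big_nat_recr //= IH -!natr1; ring.
Qed.

Lemma sum_sign_modn_coprime (R : nzRingType) p q : coprime p q -> odd p -> odd q ->
  \sum_(j < p * q) (-1 : R) ^+ (j %% p + j %% q) = 1.
Proof.
move=> co_pq p_odd q_odd.
have p_gt0 := odd_gt0 p_odd; have q_gt0 := odd_gt0 q_odd.
have pq_gt0 : (0 < p * q)%N by rewrite muln_gt0 p_gt0.
have crt_modl i k : (i < p)%N -> (chinese p q i k %% (p * q) %% p = i)%N.
  by move=> ltip; rewrite modn_dvdm ?dvdn_mulr // chinese_modl // modn_small.
have crt_modr i k : (k < q)%N -> (chinese p q i k %% (p * q) %% q = k)%N.
  by move=> ltkq; rewrite modn_dvdm ?dvdn_mull // chinese_modr // modn_small.
pose crt (x : 'I_p * 'I_q) : 'I_(p * q) :=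
  Ordinal (ltn_pmod (chinese p q x.1 x.2) pq_gt0).
pose residues (j : 'I_(p * q)) : 'I_p * 'I_q :=
  (Ordinal (ltn_pmod j p_gt0), Ordinal (ltn_pmod j q_gt0)).
rewrite (reindex crt) /=; last first.
  exists residues => [[i k] _|j _]; apply/eqP.
  - by rewrite xpair_eqE; apply/andP; split; apply/eqP/val_inj; rewrite /= ?crt_modl ?crt_modr.
  - apply/eqP/val_inj; rewrite /= -[RHS](modn_small (ltn_ord j)).
    by apply/eqP; rewrite chinese_remainder // chinese_modl // chinese_modr // !modn_mod !eqxx.
rewrite -(pair_big xpredT xpredT (fun i k => (-1 : R) ^+ (crt (i, k) %% p + crt (i, k) %% q))) /=.
under eq_bigr => i _ do under eq_bigr => k _ do rewrite crt_modl // crt_modr // exprD.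
by rewrite -big_distrlr /= !sum_sign_odd // mulr1.
Qed.

Lemma big_nat_mul_periodic (R : nmodType) k n (F : nat -> R) :
  (forall m t, F (m * n + t)%N = F t) ->
  \sum_(0 <= i < k * n) F i = (\sum_(0 <= t < n) F t) *+ k.
Proof.
move=> F_periodic; rewrite big_nat_mul_shift -[k in RHS]subn0 -sumr_const_nat.
by apply: eq_bigr => m _; apply: eq_bigr => t _; rewrite F_periodic.
Qed.

Lemma sum_sign_modn_mul (R : nzRingType) p q g :
  coprime p q -> odd p -> odd q -> odd g ->
  \sum_(0 <= n < p * g * (q * g)) (-1 : R) ^+ (n %% (p * g) + n %% (q * g))
  = (g ^ 2)%:R.
Proof.
move=> co_pq p_odd q_odd g_odd.
have p_gt0 := odd_gt0 p_odd; have q_gt0 := odd_gt0 q_odd; have g_gt0 := odd_gt0 g_odd.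
have -> : (p * g * (q * g) = (g * (p * q)) * g)%N by ring.
rewrite big_nat_mul_shift.
(* Writing n = m g + t with t < g, both residues of n gain t, whose parity cancels. *)
transitivity (\sum_(0 <= m < g * (p * q)) (-1 : R) ^+ (m %% p + m %% q) *+ g).
  apply: eq_bigr => m _; rewrite -[in RHS](subn0 g) -sumr_const_nat.
  apply: eq_big_nat => t /andP[_ t_lt_g]; rewrite !modn_mulD_mul //.
  rewrite -signr_odd -[RHS]signr_odd; congr (_ ^+ nat_of_bool _).
  by rewrite !oddD !oddM g_odd !andbT addbACA addbb addbF.
rewrite sumrMnl big_nat_mul_periodic => [|m j]; last first.
  rewrite {1}(_ : m * (p * q) = m * q * p)%N ?modnMDl; last by ring.
  by rewrite (_ : m * (p * q) = m * p * q)%N ?modnMDl; last by ring.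
by rewrite big_mkord sum_sign_modn_coprime // -mulrnA mulnn natrX.
Qed.

Lemma sum_nat_dvdn (R : nzRingType) a M (F : nat -> R) : (0 < a)%N ->
  \sum_(0 <= n < M * a) F n * (a %| n)%:R = \sum_(0 <= r < M) F (r * a)%N.
Proof.
case: a => // a _; rewrite big_nat_mul_shift; apply: eq_bigr => r _.
rewrite big_nat_recl // addn0 dvdn_mull // mulr1 big1_seq ?addr0 // => t.
rewrite mem_index_iota => /andP[_ t_lt_a].
by rewrite dvdn_addr ?dvdn_mull // gtnNdvd // mulr0.
Qed.

Lemma sum_centered_sym (R : numFieldType) (P : pred nat) N :
  (forall n, (n <= N)%N -> P (N - n)%N = P n) ->
  \sum_(0 <= n < N.+1) (n%:R - N%:R / 2) * (P n)%:R = 0 :> R.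
Proof.
move=> P_sym; set S := \sum_(_ <= _ < _) _.
have S_opp : S = - S.
  rewrite {1}/S big_nat_rev /= -sumrN; apply: eq_big_nat => n /andP[_ n_le_N].
  by rewrite add0n subSS P_sym // natrB //; field.
by apply/eqP; rewrite -[_ == _](mulrn_eq0 _ 2) mulr2n {1}S_opp addNr.
Qed.

Definition alt_sign (a b n : nat) : rat := (-1) ^+ (n %/ a + n %/ b).

Definition sign_flip (a b n : nat) : rat :=
  (a %| n)%:R + (b %| n)%:R - 2 * (a %| n)%:R * (b %| n)%:R.

Lemma alt_signC a b n : alt_sign a b n = alt_sign b a n.
Proof. by rewrite /alt_sign addnC. Qed.

Lemma alt_signS a b m : (0 < a)%N -> (0 < b)%N ->
  alt_sign a b m.+1 - alt_sign a b m = 2 * alt_sign a b m.+1 * sign_flip a b m.+1.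
Proof.
move=> a_gt0 b_gt0; rewrite /alt_sign /sign_flip !divnS // addnACA exprD.
by case: (a %| m.+1)%N; case: (b %| m.+1)%N; rewrite /= ?expr0 ?expr1; ring.
Qed.

Lemma s5_natE (a b : nat) : (0 < b)%N ->
  s5 a b = \sum_(1 <= r < b) (-1) ^+ (r + a * r %/ b) * (r%:R / b%:R - 1 / 2).
Proof.
move=> b_gt0; pose F r : rat := (-1) ^+ (r + a * r %/ b) * (r%:R / b%:R - 1 / 2).
transitivity (\sum_(r < b) (val r != 0%N)%:R * F r); last first.
  rewrite -(big_mkord xpredT (fun r => (r != 0%N)%:R * F r)) big_ltn //= mul0r add0r.
  by under eq_big_nat => r /andP[r_gt0 _] do rewrite -lt0n r_gt0 mul1r.
rewrite /s5 absz_nat; apply: eq_bigr => -[r r_lt_b] _ /=.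
have [-> | r_neq0] := eqVneq r 0%N; first by rewrite /sawtooth mul0r rpred0 mulr0 mul0r.
have r_div_b_floor : Num.floor (r%:R / b%:R : rat) = 0 by rewrite floor_natr_div ?divn_small.
have r_div_b_nonint : (r%:R / b%:R : rat) \isn't a Num.int.
  apply/negP => /floorK; rewrite r_div_b_floor => /esym /eqP.
  by rewrite mulf_eq0 invr_eq0 !pnatr_eq0 (negPf r_neq0) eqn0Ngt b_gt0.
rewrite /sawtooth (negPf r_div_b_nonint) r_div_b_floor -!pmulrn subr0 mul1r.
by rewrite -natrM floor_natr_div // -PoszD mul1r /F div1r.
Qed.

Definition centered_sign (a b n : nat) : rat :=
  (n%:R - (a * b)%:R / 2) * alt_sign a b n.

Section OddPair.

Variables a b : nat.
Hypotheses (a_odd : odd a) (b_odd : odd b).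

Lemma alt_signE n : alt_sign a b n = (-1) ^+ (n %% a + n %% b).
Proof.
rewrite /alt_sign -signr_odd -[RHS]signr_odd; congr (_ ^+ nat_of_bool _).
by rewrite !oddD !odd_divn // addbACA addbb.
Qed.

Lemma alt_sign_dvdn n : (a %| n)%N -> (b %| n)%N -> alt_sign a b n = 1.
Proof. by rewrite alt_signE /dvdn => /eqP-> /eqP->. Qed.

Lemma sum_alt_sign : \sum_(0 <= n < a * b) alt_sign a b n = (gcdn a b ^ 2)%:R.
Proof.
set g := gcdn a b.
have [a' a_eq] : exists a', a = (a' * g)%N by apply/dvdnP; rewrite dvdn_gcdl.
have [b' b_eq] : exists b', b = (b' * g)%N by apply/dvdnP; rewrite dvdn_gcdr.
have g_gt0 : (0 < g)%N by rewrite gcdn_gt0 odd_gt0.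
have co_ab' : coprime a' b'.
  by rewrite /coprime -(eqn_pmul2r g_gt0) muln_gcdl -a_eq -b_eq mul1n.
have /andP[a'_odd g_odd] : odd a' && odd g by rewrite -oddM -a_eq.
have /andP[b'_odd _] : odd b' && odd g by rewrite -oddM -b_eq.
under eq_bigr => n _ do rewrite alt_signE.
by rewrite a_eq b_eq sum_sign_modn_mul.
Qed.

Lemma sum_centered_sign_dvdl :
  \sum_(0 <= n < a * b) centered_sign a b n * (a %| n)%:R
  = (a * b)%:R * s5 a b - (a * b)%:R / 2.
Proof.
have a_gt0 := odd_gt0 a_odd; have b_gt0 := odd_gt0 b_odd.
rewrite [in X in \sum_(0 <= n < X) _]mulnC sum_nat_dvdn // s5_natE // mulr_sumr.
rewrite big_ltn // /centered_sign /alt_sign mul0n !div0n expr0 mulr1 sub0r addrC.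
congr (_ - _); apply: eq_bigr => r _.
rewrite mulnK // [(r * a)%N]mulnC !natrM; field.
by rewrite pnatr_eq0 -lt0n.
Qed.

Lemma sum_centered_sign_dvdlr :
  \sum_(0 <= n < a * b) centered_sign a b n * ((a %| n)%:R * (b %| n)%:R)
  = - ((a * b)%:R / 2).
Proof.
set N := (a * b)%N.
have a_dvd_N : (a %| N)%N by rewrite dvdn_mulr.
have b_dvd_N : (b %| N)%N by rewrite dvdn_mull.
pose P n := ((a %| n) && (b %| n))%N.
have P_sym n : (n <= N)%N -> P (N - n)%N = P n by move=> n_le_N; rewrite /P !dvdn_subr.
transitivity (\sum_(0 <= n < N) (n%:R - N%:R / 2) * (P n)%:R : rat).
  apply: eq_bigr => n _; rewrite /centered_sign /P.
  by case: (boolP (a %| n)%N) => a_dvd_n; case: (boolP (b %| n)%N) => b_dvd_n;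
    rewrite ?mulr0 ?mul0r //= alt_sign_dvdn // !mulr1.
move: (@sum_centered_sym rat _ _ P_sym); rewrite big_nat_recr //= /P a_dvd_N b_dvd_N.
by move/eqP; rewrite addr_eq0 => /eqP ->; rewrite mulr1; field.
Qed.

End OddPair.

Lemma sign_flip_dvdn a b n : (a %| n)%N -> (b %| n)%N -> sign_flip a b n = 0.
Proof. by rewrite /sign_flip => -> ->; rewrite mulr1; ring. Qed.

Lemma sum_centered_sign_flip a b : odd a -> odd b ->
  \sum_(0 <= n < a * b) centered_sign a b n * sign_flip a b n
  = (a * b)%:R * (s5 a b + s5 b a).
Proof.
move=> a_odd b_odd.
have sum_dvdr : \sum_(0 <= n < a * b) centered_sign a b n * (b %| n)%:R
    = (a * b)%:R * s5 b a - (a * b)%:R / 2.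
  rewrite mulnC -sum_centered_sign_dvdl //; apply: eq_bigr => n _.
  by rewrite /centered_sign alt_signC mulnC.
rewrite /sign_flip.
under eq_bigr => n _ do rewrite mulrBr mulrDr -mulrA mulrCA.
rewrite sumrB big_split /= -mulr_sumr sum_centered_sign_dvdl // sum_dvdr.
rewrite sum_centered_sign_dvdlr //; ring.
Qed.

Lemma sum_centered_sign_flip_gcd a b : odd a -> odd b ->
  2 * \sum_(0 <= n < a * b) centered_sign a b n * sign_flip a b n
  = (a * b)%:R - (gcdn a b ^ 2)%:R.
Proof.
move=> a_odd b_odd; have a_gt0 := odd_gt0 a_odd; have b_gt0 := odd_gt0 b_odd.
set N := (a * b)%N.
have a_dvd_N : (a %| N)%N by rewrite dvdn_mulr.
have b_dvd_N : (b %| N)%N by rewrite dvdn_mull.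
pose T n := centered_sign a b n * sign_flip a b n.
have shift_sum : \sum_(0 <= m < N) T m.+1 = \sum_(0 <= n < N) T n.
  have T_0 : T 0%N = 0 by rewrite /T sign_flip_dvdn ?dvdn0 ?mulr0.
  have T_N : T N = 0 by rewrite /T sign_flip_dvdn ?mulr0.
  have : \sum_(0 <= n < N.+1) T n = T 0%N + \sum_(0 <= m < N) T m.+1 by rewrite big_nat_recl.
  by rewrite big_nat_recr //= T_0 T_N addr0 add0r.
have := @abel_summation _ (alt_sign a b) N (N%:R / 2).
rewrite alt_sign_dvdn ?dvdn0 // alt_sign_dvdn // sum_alt_sign // subrr mulr0 subr0 mulr1.
move <-; rewrite -shift_sum mulr_sumr; apply: eq_bigr => m _.
by rewrite alt_signS // /T /centered_sign -/N; ring.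
Qed.

Theorem corollary1p2 (a b : nat) (ha : odd a) (hb : odd b) :
  s5 a%:Z b%:Z + s5 b%:Z a%:Z
  = 1 / 2 - ((gcdn a b) ^ 2)%:R / (2 * a * b)%:R :> rat.
Proof.
have a_neq0 : a%:R != 0 :> rat by rewrite pnatr_eq0 -lt0n odd_gt0.
have b_neq0 : b%:R != 0 :> rat by rewrite pnatr_eq0 -lt0n odd_gt0.
have := @sum_centered_sign_flip_gcd a b ha hb; rewrite sum_centered_sign_flip // => sum_eq.
have -> : s5 a b + s5 b a = ((a * b)%:R - (gcdn a b ^ 2)%:R) / (2 * (a * b)%:R).
  by rewrite -sum_eq; field; rewrite a_neq0 b_neq0.
by rewrite -mulnA natrM; field; rewrite a_neq0 b_neq0.
Qed.
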